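(* Let $\mathbb A$ be an abelian category with enough projective objects. A morphism $(f_0,f_1):a\to b$ in $\mathbb A^{[1]}_c$, where $a:A_1\to A_0$ and $b:B_1\to B_0$, is faithful in $\mathbb A^{[1]}_c$ if and only if the morphism $\begin{pmatrix}-a\\ f_1\end{pmatrix}:A_1\to A_0\oplus B_1$ is a monomorphism in $\mathbb A$.
   Context: Let $\mathbb A$ be an abelian category. The 2-category $\mathbb A^{[1]}$ has as objects the morphisms $a:A_1\to A_0$ of $\mathbb A$. For objects $a:A_1\to A_0$ and $b:B_1\to B_0$, a morphism $a\to b$ is a pair $(f_0,f_1)$ of morphisms $f_i:A_i\to B_i$ of $\mathbb A$ with $b f_1=f_0 a$; composition is componentwise. A 2-arrow $(f_0,f_1)\Rightarrow(g_0,g_1)$ between morphisms $a\to b$ is a morphism $\alpha:A_0\to B_1$ of $\mathbb A$ with $f_1-g_1=\alpha a$ and $f_0-g_0=b\alpha$; vertical composition is addition of such $\alpha$'s, and whiskering is given by $(h_0,h_1)\circ\alpha=h_1\alpha$ and $\alpha\circ(e_0,e_1)=\alpha e_0$. All 2-arrows are invertible, so each $\mathbf{Hom}(a,b)$ is a groupoid. $\mathbb A^{[1]}_c$ is the full 2-subcategory of $\mathbb A^{[1]}$ on the objects $a:A_1\to A_0$ with $A_0$ projective in $\mathbb A$. A morphism $f:a\to b$ of $\mathbb A^{[1]}_c$ is faithful in $\mathbb A^{[1]}_c$ if for every object $x$ of $\mathbb A^{[1]}_c$ the functor $f\circ-:\mathbf{Hom}(x,a)\to\mathbf{Hom}(x,b)$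 is faithful. *)

From HB Require Import structures.
From mathcomp Require Import all_boot all_order all_algebra.
Set Implicit Arguments. Unset Strict Implicit. Unset Printing Implicit Defensive.
Import GRing.Theory.
Local Open Scope ring_scope.

Record PreAdd := {
  ObC : Type;
  HomC : ObC -> ObC -> zmodType;
  cmp : forall A B C : ObC, HomC B C -> HomC A B -> HomC A C;
  idm : forall A : ObC, HomC A A;
  comp_assoc : forall A B C D (h : HomC C D) (g : HomC B C) (f : HomC A B),
      cmp h (cmp g f) = cmp (cmp h g) f;
  comp_idl : forall A B (f : HomC A B), cmp (idm B) f = f;
  comp_idr : forall A B (f : HomC A B), cmp f (idm A) = f;
  comp_addl : forall A B C (g g' : HomC B C) (f : HomC A B),
      cmp (g + g') f = cmp g f + cmp g' f;
  comp_addr : forall A B C (g : HomC B C) (f f' : HomC A B),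
      cmp g (f + f') = cmp g f + cmp g f'
}.

Arguments cmp {p A B C}.
Arguments idm {p}.

Notation "g \o' f" := (cmp g f) (at level 40, left associativity).

Section Cat.
Variable C : PreAdd.

Definition mono {A B : ObC C} (f : HomC A B) : Prop :=
  forall (X : ObC C) (g h : HomC X A), f \o' g = f \o' h -> g = h.

Definition epi {A B : ObC C} (f : HomC A B) : Prop :=
  forall (X : ObC C) (g h : HomC B X), g \o' f = h \o' f -> g = h.

Definition is_zero_obj (Z : ObC C) : Prop :=
  forall X : ObC C, (forall f g : HomC X Z, f = g) /\ (forall f g : HomC Z X, f = g).

Definition is_biproduct {A B S : ObC C} (i1 : HomC A S) (i2 : HomC B S)
    (p1 : HomC S A) (p2 : HomC S B) : Prop :=
  [/\ p1 \o' i1 = idm A, p2 \o' i2 = idm B, p1 \o' i2 = 0, p2 \o' i1 = 0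
    & i1 \o' p1 + i2 \o' p2 = idm S].

Definition is_kernel {K A B : ObC C} (f : HomC A B) (k : HomC K A) : Prop :=
  f \o' k = 0 /\
  forall (X : ObC C) (g : HomC X A), f \o' g = 0 ->
    exists h : HomC X K, k \o' h = g /\ forall h' : HomC X K, k \o' h' = g -> h' = h.

Definition is_cokernel {A B Q : ObC C} (f : HomC A B) (q : HomC B Q) : Prop :=
  q \o' f = 0 /\
  forall (X : ObC C) (g : HomC B X), g \o' f = 0 ->
    exists h : HomC Q X, h \o' q = g /\ forall h' : HomC Q X, h' \o' q = g -> h' = h.

Definition is_abelian : Prop :=
  (exists Z : ObC C, is_zero_obj Z) /\
      (forall A B : ObC C, exists (S : ObC C) (i1 : HomC A S) (i2 : HomC B S)
          (p1 : HomC S A) (p2 : HomC S B), is_biproduct i1 i2 p1 p2) /\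
      (forall (A B : ObC C) (f : HomC A B), exists (K : ObC C) (k : HomC K A), is_kernel f k) /\
      (forall (A B : ObC C) (f : HomC A B), exists (Q : ObC C) (q : HomC B Q), is_cokernel f q) /\
      (forall (A B : ObC C) (f : HomC A B), mono f ->
          exists (D : ObC C) (g : HomC B D), is_kernel g f) /\
      (forall (A B : ObC C) (f : HomC A B), epi f ->
          exists (D : ObC C) (g : HomC D A), is_cokernel g f).

Definition projective (P : ObC C) : Prop :=
  forall (B D : ObC C) (e : HomC B D), epi e ->
    forall g : HomC P D, exists h : HomC P B, e \o' h = g.

Definition enough_projectives : Prop :=
  forall A : ObC C, exists (P : ObC C) (p : HomC P A), projective P /\ epi p.

(* The 2-category A^[1]: an object is a morphism a : A1 -> A0 of C.
   (g0, g1) : x -> a is a morphism iff a g1 = g0 x. *)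
Definition arr_mor {X1 X0 A1 A0 : ObC C} (x : HomC X1 X0) (a : HomC A1 A0)
    (g0 : HomC X0 A0) (g1 : HomC X1 A1) : Prop :=
  a \o' g1 = g0 \o' x.

Definition two_arrow {X1 X0 A1 A0 : ObC C} (x : HomC X1 X0) (a : HomC A1 A0)
    (g0 h0 : HomC X0 A0) (g1 h1 : HomC X1 A1) (alpha : HomC X0 A1) : Prop :=
  g1 - h1 = alpha \o' x /\ g0 - h0 = a \o' alpha.

(* f = (f0,f1) : a -> b is faithful in A^[1]_c: for every object x : X1 -> X0
   with X0 projective, the functor f o - : HomC(x,a) -> HomC(x,b)
   (on 2-arrows: alpha |-> f1 alpha) is faithful. *)
Definition faithful_c {A1 A0 B1 B0 : ObC C} (a : HomC A1 A0) (b : HomC B1 B0)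
    (f0 : HomC A0 B0) (f1 : HomC A1 B1) : Prop :=
  forall (X1 X0 : ObC C) (x : HomC X1 X0), projective X0 ->
  forall (g0 h0 : HomC X0 A0) (g1 h1 : HomC X1 A1),
    arr_mor x a g0 g1 -> arr_mor x a h0 h1 ->
  forall alpha beta : HomC X0 A1,
    two_arrow x a g0 h0 g1 h1 alpha -> two_arrow x a g0 h0 g1 h1 beta ->
    f1 \o' alpha = f1 \o' beta -> alpha = beta.

End Cat.

(* Call a pair of morphisms u : A -> B, v : A -> B' jointly monic with
   respect to a class of test objects if every d : X -> A from a test object
   X with u d = 0 and v d = 0 vanishes.  The proof reduces both sides of the
   equivalence to this notion:
   - a morphism of a preadditive category is mono iff it has no nonzero
     morphism killed by it; for the column (u ; v) = i1 u + i2 v into a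
     biproduct, (u ; v) d = 0 iff u d = 0 and v d = 0, so (u ; v) is mono
     iff (u, v) is jointly monic with respect to all objects;
   - the difference of two 2-arrows between the same pair of morphisms
     x -> a is a morphism d : X0 -> A1 with a d = 0, and conversely every
     such d is a 2-arrow 0 => 0 for the object 0 : X0 -> X0; hence (f0, f1) is
     faithful in A^[1]_c iff (a, f1) is jointly monic w.r.t. projectives;
   - with enough projectives, testing on projectives suffices, since an
     epimorphism P -> X can be cancelled on the right. *)
From HB Require Import structures.
From mathcomp Require Import all_boot all_order all_algebra.
Set Implicit Arguments. Unset Strict Implicit. Unset Printing Implicit Defensive.
Import GRing.Theory.
Local Open Scope ring_scope.

Section Preadditive.
Variable C : PreAdd.

Lemma cmp0r (A B D : ObC C) (g : HomC B D) : g \o' (0 : HomC A B) = 0.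
Proof. by apply: (addIr (g \o' 0)); rewrite -comp_addr !add0r. Qed.

Lemma cmp0l (A B D : ObC C) (f : HomC A B) : (0 : HomC B D) \o' f = 0.
Proof. by apply: (addIr (0 \o' f)); rewrite -comp_addl !add0r. Qed.

Lemma cmpNr (A B D : ObC C) (g : HomC B D) (f : HomC A B) :
  g \o' (- f) = - (g \o' f).
Proof. by apply/eqP; rewrite -addr_eq0 -comp_addr addNr cmp0r. Qed.

Lemma cmpNl (A B D : ObC C) (g : HomC B D) (f : HomC A B) :
  (- g) \o' f = - (g \o' f).
Proof. by apply/eqP; rewrite -addr_eq0 -comp_addl addNr cmp0l. Qed.

Lemma cmpBr (A B D : ObC C) (g : HomC B D) (f f' : HomC A B) :
  g \o' (f - f') = g \o' f - g \o' f'.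
Proof. by rewrite comp_addr cmpNr. Qed.

Lemma monoP (A B : ObC C) (f : HomC A B) :
  mono f <-> forall (X : ObC C) (d : HomC X A), f \o' d = 0 -> d = 0.
Proof.
split=> [fmono X d fd0 | f_ker0 X g h fgh].
  by apply: fmono; rewrite fd0 cmp0r.
by apply/subr0_eq/f_ker0; rewrite cmpBr fgh subrr.
Qed.

Definition jointly_mono (T : ObC C -> Prop) (A B B' : ObC C)
    (u : HomC A B) (v : HomC A B') : Prop :=
  forall (X : ObC C), T X ->
  forall d : HomC X A, u \o' d = 0 -> v \o' d = 0 -> d = 0.

Lemma jointly_monoNl (T : ObC C -> Prop) (A B B' : ObC C)
    (u : HomC A B) (v : HomC A B') :
  jointly_mono T (- u) v <-> jointly_mono T u v.
Proof.
have cmpN_eq0 X (d : HomC X A) : ((- u) \o' d == 0) = (u \o' d == 0).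
  by rewrite cmpNl oppr_eq0.
by split=> jm X TX d /eqP ud0 vd0; apply: jm => //; apply/eqP;
  rewrite ?cmpN_eq0 // -cmpN_eq0.
Qed.

(* With enough projectives, joint monicity may be tested on projectives:
   d : X -> A is cancelled against an epimorphism P -> X. *)
Lemma jointly_mono_projective (A B B' : ObC C) (u : HomC A B) (v : HomC A B') :
  enough_projectives C ->
  jointly_mono (@projective C) u v <-> jointly_mono (fun=> True) u v.
Proof.
move=> enough; split=> [jm X _ d ud0 vd0 | jm X _]; last exact: jm.
have [P [p [projP epi_p]]] := enough X.
apply: epi_p; rewrite cmp0l; apply: jm => //.
  by rewrite comp_assoc ud0 cmp0l.
by rewrite comp_assoc vd0 cmp0l.
Qed.

(* A column (u ; v) = i1 u + i2 v into a biproduct is mono iff (u, v) is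
   jointly monic, because its components are recovered by p1 and p2. *)
Lemma mono_column (A B B' S : ObC C) (i1 : HomC B S) (i2 : HomC B' S)
    (p1 : HomC S B) (p2 : HomC S B') (u : HomC A B) (v : HomC A B') :
  is_biproduct i1 i2 p1 p2 ->
  mono (i1 \o' u + i2 \o' v) <-> jointly_mono (fun=> True) u v.
Proof.
case=> p1i1 p2i2 p1i2 p2i1 _; set m := i1 \o' u + i2 \o' v.
have p1m : p1 \o' m = u.
  by rewrite comp_addr !comp_assoc p1i1 p1i2 comp_idl cmp0l addr0.
have p2m : p2 \o' m = v.
  by rewrite comp_addr !comp_assoc p2i2 p2i1 comp_idl cmp0l add0r.
split=> [/monoP m_ker0 X _ d ud0 vd0 | jm]; last apply/monoP=> X d md0.
  by apply: m_ker0; rewrite comp_addl -!comp_assoc ud0 vd0 !cmp0r addr0.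
by apply: jm => //; rewrite -?p1m -?p2m -comp_assoc md0 cmp0r.
Qed.

(* (f0, f1) is faithful in A^[1]_c iff (a, f1) is jointly monic with respect
   to projective objects: differences of parallel 2-arrows are exactly the
   morphisms d : X0 -> A1 with a d = 0, each being a 2-arrow 0 => 0 for the
   object 0 : X0 -> X0. *)
Lemma faithful_cP (A1 A0 B1 B0 : ObC C) (a : HomC A1 A0) (b : HomC B1 B0)
    (f0 : HomC A0 B0) (f1 : HomC A1 B1) :
  faithful_c a b f0 f1 <-> jointly_mono (@projective C) a f1.
Proof.
split=> [faithful P projP d ad0 f1d0 | jm X1 X0 x projX0 g0 h0 g1 h1 _ _
           alpha beta [_ a_alpha] [_ a_beta] f1_eq].
  have zero_mor : arr_mor (0 : HomC P P) a 0 0 by rewrite /arr_mor !cmp0r.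
  apply: (faithful P P 0 projP 0 0 0 0 zero_mor zero_mor d 0).
  - by split; rewrite subrr ?cmp0r.
  - by split; rewrite subrr ?cmp0r.
  - by rewrite f1d0 cmp0r.
apply/subr0_eq/jm => //; rewrite cmpBr ?f1_eq ?subrr //.
by rewrite -a_alpha -a_beta subrr.
Qed.

End Preadditive.

(* Lemma 3.2. *)
Theorem lemma3p2 (C : PreAdd) (HabC : is_abelian C) (Hproj : enough_projectives C)
    (A1 A0 B1 B0 : ObC C) (a : HomC A1 A0) (b : HomC B1 B0)
    (hA0 : projective A0) (hB0 : projective B0)
    (f0 : HomC A0 B0) (f1 : HomC A1 B1) (hf : arr_mor a b f0 f1)
    (S : ObC C) (i1 : HomC A0 S) (i2 : HomC B1 S) (p1 : HomC S A0) (p2 : HomC S B1)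
    (hS : is_biproduct i1 i2 p1 p2) :
  faithful_c a b f0 f1 <-> mono (i1 \o' (- a) + i2 \o' f1).
Proof.
apply: (iff_trans (faithful_cP a b f0 f1)).
apply: (iff_trans (jointly_mono_projective a f1 Hproj)).
apply: (iff_trans (iff_sym (jointly_monoNl _ a f1))).
exact: iff_sym (mono_column (- a) f1 hS).
Qed.
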